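(* Let $S$ be a quasi-adequate semigroup with an adequate transversal $S^0$. Then $S$ is orthodox if and only if $S^0$ is an inverse semigroup.
   Context: For a semigroup $S$, $S^1$ is $S$ with an identity adjoined, $\mathcal{L},\mathcal{R}$ Green's relations. $\mathcal{R}^\ast=\{(a,b):\forall x,y\in S^1,\ xa=ya\iff xb=yb\}$, $\mathcal{L}^\ast=\{(a,b):\forall x,y\in S^1,\ ax=ay\iff bx=by\}$. $S$ is abundant if each $\mathcal{R}^\ast$- and $\mathcal{L}^\ast$-class contains an idempotent; adequate if also idempotents commute (then $a^+$, $a^\ast$ are the unique idempotents $\mathcal{R}^\ast$-, resp. $\mathcal{L}^\ast$-related to $a$). Quasi-adequate: abundant with idempotents forming a subsemigroup; orthodox: regular with idempotents forming a subsemigroup. An abundant subsemigroup $U$ of abundant $S$ is a $\ast$-subsemigroup if $\mathcal{L}^\ast(U)=\mathcal{L}^\ast(S)\cap(U\times U)$, $\mathcal{R}^\ast(U)=\mathcal{R}^\ast(S)\cap(U\times U)$. An adequate $\ast$-subsemigroup $S^0$ of abundant $S$ is an adequate transversal if each $x\in S$ has a unique $\overline{x}\in S^0$ and idempotents $e,f$ of $S$ with $x=e\overline{x}f$, $e\,\mathcal{L}\,\overline{x}^+$, $f\,\mathcal{R}\,\overline{x}^\ast$. *)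

Section SemigroupDefs.
Context {S : Type} (mul : S -> S -> S).

(* S^1 = S with an adjoined identity, modelled as option S (None = identity). *)
Definition lmul (x : option S) (a : S) : S :=
  match x with None => a | Some x => mul x a end.
Definition rmul (a : S) (x : option S) : S :=
  match x with None => a | Some x => mul a x end.
Definition in1 (U : S -> Prop) (x : option S) : Prop :=
  match x with None => True | Some x => U x end.

Definition fullS : S -> Prop := fun _ => True.

Definition idempotent (e : S) : Prop := mul e e = e.

Definition GreenL (a b : S) : Prop :=
  exists x y : option S, a = lmul x b /\ b = lmul y a.
Definition GreenR (a b : S) : Prop :=
  exists x y : option S, a = rmul b x /\ b = rmul a y.

Definition Rstar_in (U : S -> Prop) (a b : S) : Prop :=
  forall x y : option S, in1 U x -> in1 U y ->
    (lmul x a = lmul y a <-> lmul x b = lmul y b).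
Definition Lstar_in (U : S -> Prop) (a b : S) : Prop :=
  forall x y : option S, in1 U x -> in1 U y ->
    (rmul a x = rmul a y <-> rmul b x = rmul b y).

Definition subsemigroup (U : S -> Prop) : Prop :=
  forall a b, U a -> U b -> U (mul a b).

Definition abundant_in (U : S -> Prop) : Prop :=
  forall a, U a ->
    (exists e, U e /\ idempotent e /\ Rstar_in U a e) /\
    (exists f, U f /\ idempotent f /\ Lstar_in U a f).

Definition idempotents_commute_in (U : S -> Prop) : Prop :=
  forall e f, U e -> U f -> idempotent e -> idempotent f -> mul e f = mul f e.

Definition idempotents_closed_in (U : S -> Prop) : Prop :=
  forall e f, U e -> U f -> idempotent e -> idempotent f -> idempotent (mul e f).

Definition adequate_in (U : S -> Prop) : Prop :=
  abundant_in U /\ idempotents_commute_in U.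

Definition regular_in (U : S -> Prop) : Prop :=
  forall a, U a -> exists x, U x /\ mul (mul a x) a = a.

Definition inverse_in (U : S -> Prop) : Prop :=
  forall a, U a -> exists b, (U b /\ mul (mul a b) a = a /\ mul (mul b a) b = b) /\
    forall b', U b' -> mul (mul a b') a = a -> mul (mul b' a) b' = b' -> b' = b.

Definition quasi_adequate : Prop :=
  abundant_in fullS /\ idempotents_closed_in fullS.

Definition orthodox : Prop :=
  regular_in fullS /\ idempotents_closed_in fullS.

Definition star_subsemigroup (U : S -> Prop) : Prop :=
  subsemigroup U /\ abundant_in U /\
  forall a b, U a -> U b ->
    (Lstar_in U a b <-> Lstar_in fullS a b) /\
    (Rstar_in U a b <-> Rstar_in fullS a b).

(* x = e xb f with e idempotent, e L xb^+, f idempotent, f R xb^*, where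
   xb^+ (resp. xb^* ) is the (unique, as S0 is adequate) idempotent of S0
   that is R*- (resp. L*-) related to xb in S0. *)
Definition transversal_decomp (S0 : S -> Prop) (x xb : S) : Prop :=
  exists e f, idempotent e /\ idempotent f /\ x = mul (mul e xb) f /\
    (exists g, S0 g /\ idempotent g /\ Rstar_in S0 xb g /\ GreenL e g) /\
    (exists h, S0 h /\ idempotent h /\ Lstar_in S0 xb h /\ GreenR f h).

Definition adequate_transversal (S0 : S -> Prop) : Prop :=
  star_subsemigroup S0 /\ adequate_in S0 /\
  forall x, exists xb, S0 xb /\ transversal_decomp S0 x xb /\
    forall xb', S0 xb' -> transversal_decomp S0 x xb' -> xb' = xb.

End SemigroupDefs.

From Stdlib Require Import Setoid.

(* If S is regular, an inverse b of a in S0 can be chosen with ab = a^+ and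
   ba = a^* in S0; this forces the transversal decomposition of b to be
   b = b0^+ b0 b0^*, so b lies in S0, and inverses in S0 are unique because its
   idempotents commute.  Conversely, if S0 is inverse and x = e x0 f, the
   inverse of x0 in S0 is an inverse of x. *)

Section IdempotentsEq.
Context {S : Type} (mul : S -> S -> S)
  (assoc : forall a b c : S, mul a (mul b c) = mul (mul a b) c).

Lemma idempotents_eq_of_R_L f g k :
  mul f g = g -> mul g f = f -> mul g k = g -> mul k g = k ->
  mul f k = mul k f -> g = k.
Proof.
  intros fg gf gk kg fk_kf.
  assert (fk : mul f k = f).
  { rewrite <- gf at 1. rewrite <- assoc, fk_kf, assoc, gk. exact gf. }
  assert (kf : mul k f = f) by (rewrite <- fk_kf; exact fk).
  rewrite <- fg, <- kf, <- assoc, fg. exact kg.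
Qed.

End IdempotentsEq.

Lemma idempotents_eq_of_L_R {S : Type} (mul : S -> S -> S)
  (assoc : forall a b c : S, mul a (mul b c) = mul (mul a b) c) e h l :
  mul h e = h -> mul e h = e -> mul l h = h -> mul h l = l ->
  mul l e = mul e l -> h = l.
Proof.
  apply (idempotents_eq_of_R_L (fun x y => mul y x)).
  intros a b c. symmetry. apply assoc.
Qed.

Section Semigroup.
Context {S : Type} (mul : S -> S -> S)
  (assoc : forall a b c : S, mul a (mul b c) = mul (mul a b) c).

Lemma GreenL_idempotents e g :
  idempotent mul e -> idempotent mul g -> GreenL mul e g ->
  mul e g = e /\ mul g e = g.
Proof.
  unfold idempotent; intros ee gg [x [y [Ee Eg]]]; split.
  - destruct x as [x|]; simpl in Ee; rewrite Ee; [rewrite <- assoc|];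
      rewrite gg; reflexivity.
  - destruct y as [y|]; simpl in Eg; rewrite Eg; [rewrite <- assoc|];
      rewrite ee; reflexivity.
Qed.

Lemma GreenR_idempotents f h :
  idempotent mul f -> idempotent mul h -> GreenR mul f h ->
  mul h f = f /\ mul f h = h.
Proof.
  unfold idempotent; intros ff hh [x [y [Ef Eh]]]; split.
  - destruct x as [x|]; simpl in Ef; rewrite Ef; [rewrite assoc|];
      rewrite hh; reflexivity.
  - destruct y as [y|]; simpl in Eh; rewrite Eh; [rewrite assoc|];
      rewrite ff; reflexivity.
Qed.

Lemma Rstar_in_mul_eq U a e x y : U x -> U y -> Rstar_in mul U a e ->
  mul x a = mul y a -> mul x e = mul y e.
Proof. intros Ux Uy ae. exact (proj1 (ae (Some x) (Some y) Ux Uy)). Qed.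

Lemma Rstar_in_left_unit U a e x : U x -> Rstar_in mul U a e ->
  mul x a = a -> mul x e = e.
Proof. intros Ux ae. exact (proj1 (ae (Some x) None Ux I)). Qed.

Lemma Rstar_in_idempotent U a e : U e -> idempotent mul e ->
  Rstar_in mul U a e -> mul e a = a.
Proof. intros Ue ee ae. exact (proj2 (ae (Some e) None Ue I) ee). Qed.

Lemma Lstar_in_mul_eq U a f x y : U x -> U y -> Lstar_in mul U a f ->
  mul a x = mul a y -> mul f x = mul f y.
Proof. intros Ux Uy af. exact (proj1 (af (Some x) (Some y) Ux Uy)). Qed.

Lemma Lstar_in_right_unit U a f x : U x -> Lstar_in mul U a f ->
  mul a x = a -> mul f x = f.
Proof. intros Ux af. exact (proj1 (af (Some x) None Ux I)). Qed.

Lemma Lstar_in_idempotent U a f : U f -> idempotent mul f ->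
  Lstar_in mul U a f -> mul a f = a.
Proof. intros Uf ff af. exact (proj2 (af (Some f) None Uf I) ff). Qed.

Lemma idempotent_of_aba_eq a b : mul (mul a b) a = a -> idempotent mul (mul a b).
Proof. unfold idempotent. intros aba. rewrite assoc, aba. reflexivity. Qed.

Lemma idempotent_of_bab_eq a b : mul (mul b a) b = b -> idempotent mul (mul a b).
Proof.
  unfold idempotent. intros bab.
  rewrite assoc, <- (assoc a b a), <- assoc, bab. reflexivity.
Qed.

Lemma Rstar_in_idempotent_eq U a y k :
  subsemigroup mul U -> idempotents_commute_in mul U ->
  U a -> U y -> U k -> idempotent mul k -> Rstar_in mul U a k ->
  mul (mul a y) a = a -> k = mul a y.
Proof.
  intros Usub Ucomm Ua Uy Uk kk ak aya.
  assert (Uay : U (mul a y)) by (apply Usub; assumption).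
  assert (ay_k : mul (mul a y) k = k) by exact (Rstar_in_left_unit U a k _ Uay ak aya).
  assert (k_ay : mul k (mul a y) = mul a y)
    by (rewrite assoc, (Rstar_in_idempotent U a k Uk kk ak); reflexivity).
  rewrite <- ay_k, (Ucomm _ k Uay Uk (idempotent_of_aba_eq a y aya) kk).
  exact k_ay.
Qed.

Lemma Lstar_in_idempotent_eq U a y l :
  subsemigroup mul U -> idempotents_commute_in mul U ->
  U a -> U y -> U l -> idempotent mul l -> Lstar_in mul U a l ->
  mul (mul a y) a = a -> l = mul y a.
Proof.
  intros Usub Ucomm Ua Uy Ul ll al aya.
  assert (Uya : U (mul y a)) by (apply Usub; assumption).
  assert (l_ya : mul l (mul y a) = l)
    by (apply (Lstar_in_right_unit U a l _ Uya al); rewrite assoc; exact aya).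
  assert (ya_l : mul (mul y a) l = mul y a)
    by (rewrite <- assoc, (Lstar_in_idempotent U a l Ul ll al); reflexivity).
  rewrite <- l_ya, (Ucomm l _ Ul Uya ll (idempotent_of_bab_eq y a aya)).
  exact ya_l.
Qed.

Lemma inverse_unique_of_idempotents_commute U a b b' :
  subsemigroup mul U -> idempotents_commute_in mul U ->
  U a -> U b -> U b' ->
  mul (mul a b) a = a -> mul (mul b a) b = b ->
  mul (mul a b') a = a -> mul (mul b' a) b' = b' -> b' = b.
Proof.
  intros Usub Ucomm Ua Ub Ub' aba bab ab'a b'ab'.
  assert (b_eq : b = mul (mul b' a) b).
  { rewrite <- bab at 1.
    replace (mul b a) with (mul (mul b a) (mul b' a)) at 1
      by (rewrite <- assoc, (assoc a b' a), ab'a; reflexivity).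
    rewrite <- (Ucomm (mul b' a) (mul b a)); auto using idempotent_of_aba_eq.
    rewrite <- assoc, bab. reflexivity. }
  assert (b'_eq : b' = mul b' (mul a b)).
  { rewrite <- b'ab' at 1. rewrite <- assoc.
    replace (mul a b') with (mul (mul a b) (mul a b')) at 1
      by (rewrite assoc, aba; reflexivity).
    rewrite (Ucomm (mul a b) (mul a b')); auto using idempotent_of_aba_eq.
    rewrite assoc, (assoc b' a b'), b'ab'. reflexivity. }
  rewrite b'_eq, assoc, <- b_eq. reflexivity.
Qed.
End Semigroup.

Section Transversal.
Context {S : Type} (mul : S -> S -> S)
  (assoc : forall a b c : S, mul a (mul b c) = mul (mul a b) c)
  (S0 : S -> Prop).
Hypothesis S0_star : star_subsemigroup mul S0.
Hypothesis S0_commute : idempotents_commute_in mul S0.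
Hypothesis S0_decomp : forall x, exists x0, S0 x0 /\ transversal_decomp mul S0 x x0.

Lemma Rstar_in_full_of_star a e : S0 a -> S0 e ->
  Rstar_in mul S0 a e -> Rstar_in mul fullS a e.
Proof. intros Ua Ue. apply (proj2 (proj2 S0_star) a e Ua Ue). Qed.

Lemma Lstar_in_full_of_star a f : S0 a -> S0 f ->
  Lstar_in mul S0 a f -> Lstar_in mul fullS a f.
Proof. intros Ua Uf. apply (proj2 (proj2 S0_star) a f Ua Uf). Qed.

(* With a' an inverse of a in S, b := a^* a' a^+ satisfies ab = a^+, ba = a^*. *)
Lemma exists_inverse_with_idempotents_in a a' : S0 a -> mul (mul a a') a = a ->
  exists b, mul (mul a b) a = a /\ mul (mul b a) b = b /\
    S0 (mul a b) /\ S0 (mul b a).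
Proof.
  intros Ua aa'a.
  destruct (proj1 (proj2 S0_star) a Ua)
    as [[e [Ue [ee ae]]] [f [Uf [ff af]]]].
  assert (ea : mul e a = a) by exact (Rstar_in_idempotent mul S0 a e Ue ee ae).
  assert (a_f : mul a f = a) by exact (Lstar_in_idempotent mul S0 a f Uf ff af).
  assert (aa'e : mul (mul a a') e = e).
  { apply (Rstar_in_left_unit mul fullS a); [exact I | | exact aa'a].
    apply Rstar_in_full_of_star; assumption. }
  assert (fa'a : mul f (mul a' a) = f).
  { apply (Lstar_in_right_unit mul fullS a); [exact I | |].
    - apply Lstar_in_full_of_star; assumption.
    - rewrite assoc. exact aa'a. }
  exists (mul (mul f a') e).
  assert (ab : mul a (mul (mul f a') e) = e) by (rewrite !assoc, a_f; exact aa'e).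
  assert (ba : mul (mul (mul f a') e) a = f)
    by (rewrite <- assoc, ea, <- assoc; exact fa'a).
  rewrite ab, ba. repeat split; try assumption.
  rewrite !assoc, ff. reflexivity.
Qed.

(* Writing b = g b0 h, the idempotent b a lies in S0, is R-related to g and
   commutes with b0^+; as g L b0^+ this forces g = b0^+.  Dually h = b0^*. *)
Lemma transversal_mem_of_inverse_idempotents a b :
  S0 (mul a b) -> S0 (mul b a) -> mul (mul b a) b = b -> S0 b.
Proof.
  intros Uab Uba bab.
  destruct (S0_decomp b) as [b0 [Ub0 [g [h [gg [hh [b_eq
    [[k [Uk [kk [b0k gk_L]]]] [l [Ul [ll [b0l hl_R]]]]]]]]]]]].
  destruct (GreenL_idempotents mul assoc g k gg kk gk_L) as [gk kg].
  destruct (GreenR_idempotents mul assoc h l hh ll hl_R) as [lh hl].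
  assert (kb0 : mul k b0 = b0) by exact (Rstar_in_idempotent mul S0 b0 k Uk kk b0k).
  assert (b0l_b0 : mul b0 l = b0) by exact (Lstar_in_idempotent mul S0 b0 l Ul ll b0l).
  assert (b0k_full := Rstar_in_full_of_star b0 k Ub0 Uk b0k).
  assert (b0l_full := Lstar_in_full_of_star b0 l Ub0 Ul b0l).
  assert (bl : mul b l = mul g b0)
    by (rewrite b_eq, <- assoc, hl, <- assoc, b0l_b0; reflexivity).
  assert (kb : mul k b = mul b0 h)
    by (rewrite b_eq, !assoc, kg, kb0; reflexivity).
  assert (g_eq : g = k).
  { apply (idempotents_eq_of_R_L mul assoc (mul b a)); try assumption.
    - assert (bag_b0 : mul (mul (mul b a) g) b0 = mul g b0)
        by (rewrite <- assoc, <- bl, assoc, bab; reflexivity).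
      pose proof (Rstar_in_mul_eq mul fullS b0 k _ _ I I b0k_full bag_b0) as bag_k.
      rewrite <- assoc, gk in bag_k. exact bag_k.
    - rewrite assoc, b_eq, !assoc, gg. reflexivity.
    - exact (S0_commute _ _ Uba Uk (idempotent_of_aba_eq mul assoc b a bab) kk). }
  assert (h_eq : h = l).
  { apply (idempotents_eq_of_L_R mul assoc (mul a b)); try assumption.
    - assert (b0_hab : mul b0 (mul h (mul a b)) = mul b0 h)
        by (rewrite assoc, <- kb, <- assoc, (assoc b a b), bab; reflexivity).
      pose proof (Lstar_in_mul_eq mul fullS b0 l _ _ I I b0l_full b0_hab) as l_hab.
      rewrite assoc, lh in l_hab. exact l_hab.
    - rewrite <- assoc, b_eq, <- !assoc, hh. reflexivity.
    - exact (S0_commute _ _ Ul Uab ll (idempotent_of_bab_eq mul assoc a b bab)). }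
  rewrite b_eq, g_eq, h_eq, kb0, b0l_b0. exact Ub0.
Qed.

(* If y is the inverse of x0 in S0, then x0 y = x0^+ and y x0 = x0^*, so
   e and f act trivially on y. *)
Lemma regular_of_inverse_transversal : inverse_in mul S0 -> regular_in mul fullS.
Proof.
  intros S0_inverse x _.
  destruct (S0_decomp x) as [x0 [Ux0 [e [f [ee [ff [x_eq
    [[k [Uk [kk [x0k ek_L]]]] [l [Ul [ll [x0l fl_R]]]]]]]]]]]].
  destruct (S0_inverse x0 Ux0) as [y [[Uy [x0yx0 yx0y]] _]].
  exists y. split; [exact I |].
  destruct (GreenL_idempotents mul assoc e k ee kk ek_L) as [_ ke].
  destruct (GreenR_idempotents mul assoc f l ff ll fl_R) as [_ fl].
  assert (k_eq : k = mul x0 y) by exact (Rstar_in_idempotent_eq mul assoc S0 x0 y k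
    (proj1 S0_star) S0_commute Ux0 Uy Uk kk x0k x0yx0).
  assert (l_eq : l = mul y x0) by exact (Lstar_in_idempotent_eq mul assoc S0 x0 y l
    (proj1 S0_star) S0_commute Ux0 Uy Ul ll x0l x0yx0).
  assert (yk : mul y k = y) by (rewrite k_eq, assoc; exact yx0y).
  assert (ly : mul l y = y) by (rewrite l_eq; exact yx0y).
  assert (ye : mul y e = y) by (rewrite <- yk, <- assoc, ke; reflexivity).
  assert (fy : mul f y = y) by (rewrite <- ly, assoc, fl; reflexivity).
  rewrite x_eq, <- !assoc, (assoc y e), ye, (assoc f y), fy,
    (assoc y x0 f), (assoc x0 (mul y x0) f), (assoc x0 y x0), x0yx0.
  reflexivity.
Qed.

End Transversal.

Theorem proposition4p1 (S : Type) (mul : S -> S -> S)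
  (assoc : forall a b c : S, mul a (mul b c) = mul (mul a b) c)
  (S0 : S -> Prop)
  (hqa : quasi_adequate mul)
  (hS0 : adequate_transversal mul S0) :
  orthodox mul <-> inverse_in mul S0.
Proof.
  destruct hqa as [_ S_idempotents_closed].
  destruct hS0 as [S0_star [[_ S0_commute] S0_transversal]].
  assert (S0_decomp : forall x, exists x0, S0 x0 /\ transversal_decomp mul S0 x x0).
  { intros x. destruct (S0_transversal x) as [x0 [Ux0 [x_x0 _]]]. eauto. }
  split.
  - intros [S_regular _] a Ua.
    destruct (S_regular a I) as [a' [_ aa'a]].
    destruct (exists_inverse_with_idempotents_in mul assoc S0 S0_star a a' Ua aa'a)
      as [b [aba [bab [Uab Uba]]]].
    assert (Ub : S0 b) by exact (transversal_mem_of_inverse_idempotents mul assoc S0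
      S0_star S0_commute S0_decomp a b Uab Uba bab).
    exists b. split; [auto |].
    intros b' Ub' ab'a b'ab'.
    exact (inverse_unique_of_idempotents_commute mul assoc S0 a b b'
      (proj1 S0_star) S0_commute Ua Ub Ub' aba bab ab'a b'ab').
  - intros S0_inverse. split; [| exact S_idempotents_closed].
    exact (regular_of_inverse_transversal mul assoc S0
      S0_star S0_commute S0_decomp S0_inverse).
Qed.
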